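(* Let $(\Omega,+)$ be a group, $a,b$ subgroups, and $x,y,z\subseteq\Omega$ with $x\top b$, $y\top b$, $z\top b$, $a\top x$, $a\top y$. Write $x=G_X$ and $z=G_Z$ as left graphs with respect to the decomposition $\Omega\cong y\times b$, i.e. $G_X=\{\eta+X(\eta):\eta\in y\}$, $G_Z=\{\eta+Z(\eta):\eta\in y\}$ with (unique) maps $X,Z:y\to b$. Then $\Gamma(G_X,a,y,b,G_Z)=G_{X+Z\circ\mathrm{B}^{a,x,b}_y}$, i.e. $\Gamma(x,a,y,b,z)$ is the left graph of the map $y\to b$, $\eta\mapsto X(\eta)+Z(\mathrm{B}^{a,x,b}_y(\eta))$.
   Context: $(\Omega,+)$ is a group written additively but not necessarily abelian. For subsets $u,v$, $u\top v$ means every $\omega$ has a unique decomposition $\omega=\mu+\nu$ with $\mu\in u,\nu\in v$; then $P^u_v(\omega):=\nu$ and $\check P^v_u(\omega):=\mu$. The canonical kernel is $\mathrm{B}^{a,x,b}_y:y\to y$, $\eta\mapsto P^a_y(\check P^b_x(\eta))$. $\Gamma(x,a,y,b,z)=\{\omega:\exists\alpha\in a,\beta\in b:\ \alpha+\omega+\beta\in y,\ \alpha+\omega\in z,\ \omega+\beta\in x\}$. *)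

From Stdlib Require Import ClassicalEpsilon.

Set Implicit Arguments.

Section Defs.
Variables (T : Type) (add : T -> T -> T) (zero : T) (opp : T -> T).

Definition is_group : Prop :=
  (forall x y z, add x (add y z) = add (add x y) z) /\
  (forall x, add zero x = x) /\ (forall x, add x zero = x) /\
  (forall x, add (opp x) x = zero) /\ (forall x, add x (opp x) = zero).

Definition is_subgroup (a : T -> Prop) : Prop :=
  a zero /\ (forall x y, a x -> a y -> a (add x y)) /\ (forall x, a x -> a (opp x)).

Definition top (u v : T -> Prop) : Prop :=
  forall w, exists mu nu, u mu /\ v nu /\ w = add mu nu /\
    forall mu' nu', u mu' -> v nu' -> w = add mu' nu' -> mu' = mu /\ nu' = nu.

(* P^u_v(w) := nu  (the v-component); meaningful when u ⊤ v *)
Definition P (u v : T -> Prop) (w : T) : T :=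
  epsilon (inhabits zero) (fun nu => v nu /\ exists mu, u mu /\ w = add mu nu).

(* check P^v_u(w) := mu  (the u-component of w = mu + nu, mu in u, nu in v) *)
Definition Pcheck (v u : T -> Prop) (w : T) : T :=
  epsilon (inhabits zero) (fun mu => u mu /\ exists nu, v nu /\ w = add mu nu).

Definition Bker (a x b y : T -> Prop) (eta : T) : T := P a y (Pcheck b x eta).

Definition Gamma (x a y b z : T -> Prop) (w : T) : Prop :=
  exists al be, a al /\ b be /\ y (add (add al w) be) /\ z (add al w) /\ x (add w be).

Definition left_graph (y : T -> Prop) (F : T -> T) (w : T) : Prop :=
  exists eta, y eta /\ w = add eta (F eta).

End Defs.

(* Write [xi := eta + X eta] for the point of [x] above [eta]. Since [eta = xi - X eta],
   the [x]-component of [eta] in [x ⊤ b] is [xi], so [B eta] is the [y]-component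
   [zeta] of [xi = al + zeta] in [a ⊤ y]. Then [w := xi + Z zeta] satisfies the three
   conditions of [Gamma] with witnesses [-al] and [-Z zeta]. Conversely, if [al + w + be]
   lies in [y] and [al + w = zeta + Z zeta] lies in [z], uniqueness in [y ⊤ b] forces
   [be = - Z zeta] and [zeta = al + w + be], which identifies [zeta] with [B eta]. *)
From Stdlib Require Import ClassicalEpsilon.

Set Implicit Arguments.

Section Group.
Variables (T : Type) (add : T -> T -> T) (zero : T) (opp : T -> T).
Hypothesis Hgrp : is_group add zero opp.

Lemma addA (u v w : T) : add u (add v w) = add (add u v) w.
Proof. exact (proj1 Hgrp u v w). Qed.

Lemma add0r (u : T) : add zero u = u.
Proof. exact (proj1 (proj2 Hgrp) u). Qed.

Lemma addr0 (u : T) : add u zero = u.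
Proof. exact (proj1 (proj2 (proj2 Hgrp)) u). Qed.

Lemma addKr (u v : T) : add (opp u) (add u v) = v.
Proof. destruct Hgrp as [_ [_ [_ [LV _]]]]. rewrite addA, LV, add0r. reflexivity. Qed.

Lemma addrNK (u v : T) : add (add u v) (opp v) = u.
Proof. destruct Hgrp as [_ [_ [_ [_ RV]]]]. rewrite <- addA, RV, addr0. reflexivity. Qed.

Lemma addr_eq0 (u v : T) : add u v = zero -> u = opp v.
Proof. intro E. rewrite <- (addrNK u v), E, add0r. reflexivity. Qed.

Section Decomposition.
Variables (u v : T -> Prop).
Hypothesis Huv : top add u v.

Lemma top_unique {mu nu mu' nu' : T} :
  u mu -> v nu -> u mu' -> v nu' -> add mu nu = add mu' nu' -> mu = mu' /\ nu = nu'.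
Proof.
  intros Hmu Hnu Hmu' Hnu' E.
  destruct (Huv (add mu nu)) as [m [n [_ [_ [_ U]]]]].
  destruct (U _ _ Hmu Hnu eq_refl) as [-> ->].
  destruct (U _ _ Hmu' Hnu' E) as [-> ->]. split; reflexivity.
Qed.

Lemma P_decomp {mu nu w : T} : u mu -> v nu -> w = add mu nu -> P add zero u v w = nu.
Proof.
  intros Hmu Hnu ->. unfold P.
  destruct (epsilon_spec (inhabits zero)
              (fun nu' => v nu' /\ exists mu', u mu' /\ add mu nu = add mu' nu'))
    as [Hnu' [mu' [Hmu' E]]].
  - exists nu. split; [exact Hnu | exists mu; split; [exact Hmu | reflexivity]].
  - symmetry. exact (proj2 (top_unique Hmu Hnu Hmu' Hnu' E)).
Qed.

Lemma Pcheck_decomp {mu nu w : T} : u mu -> v nu -> w = add mu nu -> Pcheck add zero v u w = mu.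
Proof.
  intros Hmu Hnu ->. unfold Pcheck.
  destruct (epsilon_spec (inhabits zero)
              (fun mu' => u mu' /\ exists nu', v nu' /\ add mu nu = add mu' nu'))
    as [Hmu' [nu' [Hnu' E]]].
  - exists mu. split; [exact Hmu | exists nu; split; [exact Hnu | reflexivity]].
  - symmetry. exact (proj1 (top_unique Hmu Hnu Hmu' Hnu' E)).
Qed.

Lemma top_addr_eq0 {mu nu : T} : v zero -> u mu -> v nu -> u (add mu nu) -> nu = zero.
Proof.
  intros Hv0 Hmu Hnu Hs.
  exact (proj2 (top_unique Hmu Hnu Hs Hv0 (eq_sym (addr0 _)))).
Qed.

End Decomposition.

Section Kernel.
Variables (a b x y : T -> Prop) (X : T -> T).
Hypotheses (Hxb : top add x b) (Hay : top add a y).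
Hypothesis HbN : forall c, b c -> b (opp c).

Lemma Pcheck_graph (eta : T) :
  x (add eta (X eta)) -> b (X eta) -> Pcheck add zero b x eta = add eta (X eta).
Proof.
  intros Hxi HX. apply (Pcheck_decomp Hxb (nu := opp (X eta))); auto.
  rewrite addrNK. reflexivity.
Qed.

Lemma Bker_graph {eta al zeta : T} :
  x (add eta (X eta)) -> b (X eta) -> a al -> y zeta -> add eta (X eta) = add al zeta ->
  Bker add zero a x b y eta = zeta.
Proof.
  intros Hxi HX Hal Hz E. unfold Bker. rewrite Pcheck_graph by assumption.
  exact (P_decomp Hay Hal Hz E).
Qed.

End Kernel.

Section Gamma.
Variables (a b x y z : T -> Prop) (X Z : T -> T).
Hypotheses (Ha : is_subgroup add zero opp a) (Hb : is_subgroup add zero opp b).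
Hypotheses (Hxb : top add x b) (Hyb : top add y b) (Hay : top add a y).
Hypotheses (HXb : forall eta, y eta -> b (X eta)) (HZb : forall eta, y eta -> b (Z eta)).
Hypotheses (HxX : forall w, x w <-> left_graph add y X w)
           (HzZ : forall w, z w <-> left_graph add y Z w).

Lemma Gamma_sub_left_graph {w : T} :
  Gamma add x a y b z w ->
  left_graph add y (fun eta => add (X eta) (Z (Bker add zero a x b y eta))) w.
Proof.
  destruct Ha as [_ [_ HaN]]. destruct Hb as [Hb0 [HbD HbN]].
  intros [al [be [Hal [Hbe [Hy [Hz Hx]]]]]].
  destruct (proj1 (HxX _) Hx) as [eta [Heta Eeta]].
  destruct (proj1 (HzZ _) Hz) as [zeta [Hzeta Ezeta]].
  assert (Hs : y (add zeta (add (Z zeta) be))) by (rewrite addA, <- Ezeta; exact Hy).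
  assert (Ebe : add (Z zeta) be = zero)
    by exact (top_addr_eq0 Hyb Hb0 Hzeta (HbD _ _ (HZb Hzeta) Hbe) Hs).
  assert (Ezeta_y : zeta = add (add al w) be)
    by (rewrite <- (addr0 zeta) at 1; rewrite <- Ebe, addA, <- Ezeta; reflexivity).
  assert (HB : Bker add zero a x b y eta = zeta).
  { apply (Bker_graph X Hxb Hay HbN (al := opp al)); auto.
    - rewrite <- Eeta. exact Hx.
    - rewrite <- Eeta, Ezeta_y, <- (addA al w be), addKr. reflexivity. }
  exists eta. split; [exact Heta |].
  rewrite HB, (addr_eq0 Ebe), addA, <- Eeta, addrNK. reflexivity.
Qed.

Lemma left_graph_sub_Gamma {w : T} :
  left_graph add y (fun eta => add (X eta) (Z (Bker add zero a x b y eta))) w ->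
  Gamma add x a y b z w.
Proof.
  destruct Ha as [_ [_ HaN]]. destruct Hb as [_ [_ HbN]].
  intros [eta [Heta ->]].
  set (xi := add eta (X eta)).
  assert (Hxi : x xi) by (apply HxX; exists eta; auto).
  destruct (Hay xi) as [al [zeta [Hal [Hzeta [Exi _]]]]].
  rewrite (Bker_graph X Hxb Hay HbN Hxi (HXb Heta) Hal Hzeta Exi), addA.
  fold xi.
  assert (Eshift : add (opp al) (add xi (Z zeta)) = add zeta (Z zeta))
    by (rewrite Exi, <- addA, addKr; reflexivity).
  exists (opp al), (opp (Z zeta)).
  split; [auto |]. split; [auto |]. split; [| split].
  - rewrite Eshift, addrNK. exact Hzeta.
  - rewrite Eshift. apply HzZ. exists zeta. auto.
  - rewrite addrNK. exact Hxi.
Qed.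

End Gamma.
End Group.

Theorem theorem8p1 (T : Type) (add : T -> T -> T) (zero : T) (opp : T -> T)
  (Hgrp : is_group add zero opp)
  (a b x y z : T -> Prop)
  (Ha : is_subgroup add zero opp a) (Hb : is_subgroup add zero opp b)
  (Hxb : top add x b) (Hyb : top add y b) (Hzb : top add z b)
  (Hax : top add a x) (Hay : top add a y)
  (X Z : T -> T)
  (HXb : forall eta, y eta -> b (X eta)) (HZb : forall eta, y eta -> b (Z eta))
  (HxX : forall w, x w <-> left_graph add y X w)
  (HzZ : forall w, z w <-> left_graph add y Z w) :
  forall w, Gamma add x a y b z w <->
    left_graph add y (fun eta => add (X eta) (Z (Bker add zero a x b y eta))) w.
Proof.
  intro w. split.
  - exact (Gamma_sub_left_graph Hgrp Ha Hb Hxb Hyb Hay HXb HZb HxX HzZ).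
  - exact (left_graph_sub_Gamma Hgrp z Ha Hb Hxb Hay HXb HZb HxX HzZ).
Qed.
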